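(* Let $G$ be a finite group with $d(G)\geq 2$, and assume that $G$ is $2$-flexible. Then $G/\mathrm{Cyc}(G)$ is $1$-flexible.
   Context: For a finite group $H$, $d(H)$ denotes the minimal size of a generating set of $H$. For an integer $1 \leq k \leq d(H)$, a finite group $H$ is called $k$-flexible if for any $x_1,\dots,x_k \in H$ with $d(\langle x_1,\dots,x_k\rangle)=k$ there exist $x_{k+1},\dots,x_{d(H)} \in H$ such that $\langle x_1,\dots,x_{d(H)}\rangle = H$. The cycliciser of $G$ is $\mathrm{Cyc}(G) = \{c \in G \mid \langle c,g\rangle \text{ is cyclic for all } g \in G\}$; it is a normal subgroup of $G$. *)

From mathcomp Require Import all_boot all_fingroup all_solvable.
Set Implicit Arguments. Unset Strict Implicit. Unset Printing Implicit Defensive.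
Local Open Scope group_scope.

Definition dgen (gT : finGroupType) (H : {set gT}) : nat :=
  \big[minn/#|H|]_(A : {set gT} | (A \subset H) && (<<A>> == H)) #|A|.

Definition flexible (gT : finGroupType) (k : nat) (H : {set gT}) : Prop :=
  (1 <= k <= dgen H)%N /\
  forall x : k.-tuple gT,
    all (fun a => a \in H) x ->
    dgen <<[set:: x]>> = k ->
    exists y : (dgen H - k).-tuple gT,
      all (fun a => a \in H) y /\ <<[set:: (x : seq gT) ++ y]>> = H.

Definition Cyc (gT : finGroupType) (G : {set gT}) : {set gT} :=
  [set c in G | [forall g in G, cyclic <<[set c; g]>>]].

(** Any element of [Cyc G] and any element of [G] lie in a common cyclic
    subgroup, so a cycle of maximal order through one lift of a generator of
    [G / Cyc G] swallows [Cyc G]; lifting a minimal generating set therefore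
    gives [d(G) <= d(G / Cyc G)].  A nontrivial [x Cyc G] has a lift [x]
    outside [Cyc G], hence some [g] with [<x, g>] not cyclic, i.e. with
    [d(<x, g>) = 2].  By 2-flexibility [x, g] extends to a generating tuple of
    [G] of length [d(G)], whose image in [G / Cyc G], padded with units to
    length [d(G / Cyc G)], extends [x Cyc G]. *)

From mathcomp Require Import all_boot all_order all_fingroup all_solvable zify.
Set Implicit Arguments. Unset Strict Implicit. Unset Printing Implicit Defensive.
Import Order.TTheory.
Local Open Scope group_scope.

Section MinimalGeneration.

Variable gT : finGroupType.
Implicit Types (A : {set gT}) (H : {group gT}) (x y z : gT).

Lemma dgen_leq_card A H : A \subset H -> <<A>> = H -> (dgen H <= #|A|)%N.
Proof.
move=> sAH genA; rewrite /dgen -minEnat -leEnat.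
by apply: bigmin_le_cond; rewrite sAH genA eqxx.
Qed.

Lemma dgen_witness H :
  exists A, [/\ A \subset H, <<A>> = H & #|A| = dgen H].
Proof.
have genH : (H \subset H) && (<<H>> == H) by rewrite subxx genGid eqxx.
rewrite /dgen -minEnat (bigmin_eq_arg _ (gval H)) //.
  by case: arg_minP => // A /andP[sAH /eqP genA] _; exists A.
by move=> A /andP[sAH _]; rewrite leEnat subset_leq_card.
Qed.

Lemma dgen1 : dgen (1 : {set gT}) = 0%N.
Proof. by apply/eqP; rewrite -leqn0 -(cards0 gT) dgen_leq_card ?sub0set ?gen0. Qed.

Lemma dgen_leq1_cyclic H : (dgen H <= 1)%N -> cyclic H.
Proof.
have [A [_ <- <-]] := dgen_witness H.
rewrite leq_eqVlt ltnS leqn0 => /orP[/cards1P[a ->] | /eqP/cards0_eq ->].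
  exact: cycle_cyclic.
by rewrite gen0 cyclic1.
Qed.

Lemma dgen_pair x y : ~~ cyclic <<[set x; y]>> -> dgen <<[set x; y]>> = 2.
Proof.
move=> ncyc; apply/eqP; rewrite eqn_leq; apply/andP; split.
  apply: leq_trans (dgen_leq_card (subset_gen _) (erefl _)) _.
  by rewrite cards2 ltnS leq_b1.
by rewrite ltnNge; apply: contra ncyc; apply: dgen_leq1_cyclic.
Qed.

Lemma cyclic_gen_sub_cycle A z : A \subset <[z]> -> cyclic <<A>>.
Proof. by move=> sAz; apply: cyclicS (cycle_cyclic z); rewrite gen_subG. Qed.

Lemma mem_repr_quotient H (K : {group gT}) (xb : coset_of H) :
  H <| K -> xb \in K / H -> repr xb \in K.
Proof.
move=> nsHK xbK; rewrite -(quotientGK nsHK).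
by rewrite mem_morphpre ?repr_coset_norm //= coset_reprK.
Qed.

Lemma gen_seq_quotient H (s : seq gT) :
  [set:: s] \subset 'N(H) -> <<[set:: map (coset H) s]>> = <<[set:: s]>> / H.
Proof.
move=> nHs; rewrite quotient_gen // /quotient morphimEsub //; congr <<_>>.
apply/setP => u; rewrite in_set.
by apply/mapP/imsetP => -[x xs ->]; exists x; rewrite // ?inE in xs *.
Qed.

Lemma gen_cat_nseq1 (s : seq gT) k : <<[set:: s ++ nseq k 1]>> = <<[set:: s]>>.
Proof.
apply/eqP; rewrite eqEsubset !gen_subG; apply/andP; split.
  apply/subsetP => x; rewrite inE mem_cat mem_nseq => /orP[xs | /andP[_ /eqP ->]].
    by rewrite mem_gen ?inE.
  exact: group1.
apply: subset_trans (subset_gen _).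
by apply/subsetP => x; rewrite !inE mem_cat => ->.
Qed.

End MinimalGeneration.

Section Cycliciser.

Variables (gT : finGroupType) (G : {group gT}).
Implicit Types (A : {set gT}) (a c g h x : gT).

Lemma CycP c :
  reflect (c \in G /\ forall g, g \in G -> cyclic <<[set c; g]>>) (c \in Cyc G).
Proof.
by rewrite inE; apply: (iffP andP) => -[cG cycc]; split=> //; apply/forall_inP.
Qed.

Lemma Cyc_joint_cycle c g :
  c \in Cyc G -> g \in G -> exists2 z, z \in G & (c \in <[z]>) && (g \in <[z]>).
Proof.
move=> /CycP[cG cycc] gG; have /cyclicP[z def_z] := cycc g gG.
exists z; last by rewrite -def_z !mem_gen ?set21 ?set22.
by rewrite -cycle_subG -def_z gen_subG subUset !sub1set cG.
Qed.

Lemma group_set_Cyc : group_set (Cyc G).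
Proof.
apply/group_setP; split.
  apply/CycP; split=> // g gG; apply: (cyclic_gen_sub_cycle (z := g)).
  by rewrite subUset !sub1set group1 cycle_id.
move=> c1 c2 Cc1 Cc2; have [[c1G _] [c2G _]] := (CycP _ Cc1, CycP _ Cc2).
apply/CycP; split=> [|g gG]; first exact: groupM.
have [z zG /andP[c1z gz]] := Cyc_joint_cycle Cc1 gG.
have [w _ /andP[c2w zw]] := Cyc_joint_cycle Cc2 zG.
have szw : <[z]> \subset <[w]> by rewrite cycle_subG.
apply: (cyclic_gen_sub_cycle (z := w)).
by rewrite subUset !sub1set groupM ?(subsetP szw g gz) ?(subsetP szw c1 c1z).
Qed.

Canonical Cyc_group := group group_set_Cyc.

Lemma Cyc_sub : Cyc G \subset G.
Proof. by apply/subsetP => c /CycP[]. Qed.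

Lemma CycJ c h : c \in Cyc G -> h \in G -> c ^ h \in Cyc G.
Proof.
move=> /CycP[cG cycc] hG; apply/CycP; split=> [|g gG]; first exact: groupJ.
have -> : [set c ^ h; g] = [set c; g ^ h^-1] :^ h.
  by rewrite conjUg !conjg_set1 conjgKV.
by rewrite genJ cyclicJ cycc // groupJ ?groupV.
Qed.

Lemma Cyc_normal : Cyc G <| G.
Proof.
rewrite /normal Cyc_sub; apply/subsetP => h hG; rewrite inE.
apply/subsetP => c; rewrite mem_conjg => Cc.
by rewrite -(conjgKV h c) CycJ ?groupV.
Qed.

(* A cycle of maximal order through [a] already contains [Cyc G], since the
   joint cycle of it and any [c] in [Cyc G] can only be larger. *)
Lemma Cyc_sub_cycle a :
  a \in G -> exists2 z, z \in G & (a \in <[z]>) && (Cyc G \subset <[z]>).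
Proof.
move=> aG; pose P z := (z \in G) && (a \in <[z]>).
have Pa : P a by rewrite /P aG cycle_id.
have [z /andP[zG az] zmax] := arg_maxnP (fun z => #[z]) Pa.
exists z; rewrite // az; apply/subsetP => c Cc.
have [w wG /andP[cw zw]] := Cyc_joint_cycle Cc zG.
have szw : <[z]> \subset <[w]> by rewrite cycle_subG.
have /eqP -> : <[z]> == <[w]>.
  by rewrite eqEcard szw; apply: zmax; rewrite /P wG (subsetP szw).
exact: cw.
Qed.

Lemma dgen_leq_genU_Cyc A :
  A \subset G -> G \subset <<A :|: Cyc G>> -> (dgen G <= maxn #|A| 1)%N.
Proof.
move=> sAG sGAC.
have swap a : a \in G -> (dgen G <= #|A :\ a|.+1)%N.
  move=> aG; have [z zG /andP[az sCz]] := Cyc_sub_cycle aG.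
  have sBG : z |: (A :\ a) \subset G.
    by rewrite subUset sub1set zG (subset_trans (subD1set A a) sAG).
  have szB : <[z]> \subset <<z |: (A :\ a)>> by rewrite cycle_subG mem_gen ?setU11.
  apply: leq_trans (dgen_leq_card sBG _) _; last first.
    by rewrite cardsU1 -add1n leq_add2r leq_b1.
  apply/eqP; rewrite eqEsubset gen_subG sBG (subset_trans sGAC) //.
  rewrite gen_subG subUset (subset_trans sCz szB) andbT.
  apply/subsetP => b bA; have [-> | nba] := eqVneq b a; first exact: (subsetP szB).
  by rewrite mem_gen // !inE nba bA orbT.
have [A0 | [a aA]] := set_0Vmem A.
  by apply: leq_trans (swap 1 (group1 G)) _; rewrite A0 set0D cards0 leq_maxr.
by apply: leq_trans (swap a (subsetP sAG a aA)) _; rewrite (cardsD1 a A) aA leq_maxl.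
Qed.

Lemma dgen_leq_quotient_Cyc : (dgen G <= maxn (dgen (G / Cyc G)) 1)%N.
Proof.
have [Ab [sAbG genAb <-]] := dgen_witness (G / Cyc G)%G.
pose A := [set repr xb | xb : coset_of (Cyc G) in Ab].
have sAG : A \subset G.
  apply/subsetP => _ /imsetP[xb xbAb ->].
  exact: mem_repr_quotient Cyc_normal (subsetP sAbG xb xbAb).
have sCAC : Cyc G \subset <<A :|: Cyc G>> by rewrite sub_gen ?subsetUr.
have sGAC : G \subset <<A :|: Cyc G>>.
  rewrite -(quotientSGK (normal_norm Cyc_normal) sCAC) /= -genAb gen_subG.
  apply/subsetP => xb xbAb; rewrite -(coset_reprK xb) mem_quotient //.
  by rewrite mem_gen // inE; apply/orP; left; apply/imsetP; exists xb.
apply: leq_trans (dgen_leq_genU_Cyc sAG sGAC) _.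
by rewrite geq_max leq_maxr (leq_trans (leq_imset_card _ _) (leq_maxl _ _)).
Qed.

Lemma quotient_Cyc_lift xb :
    xb \in G / Cyc G -> xb != 1 ->
  exists x g,
    [/\ x \in G, g \in G, coset (Cyc G) x = xb & ~~ cyclic <<[set x; g]>>].
Proof.
move=> /morphimP[x _ xG ->] /= xb1; have xnC : x \notin Cyc G.
  by apply: contra xb1 => /coset_id ->.
by move: xnC; rewrite inE xG => /forall_inPn[g gG ncyc]; exists x, g.
Qed.

End Cycliciser.

Theorem corollary2p6 (gT : finGroupType) (G : {group gT}) :
  (2 <= dgen G)%N -> flexible 2 G -> flexible 1 (G / Cyc G).
Proof.
move=> d2 [_ flex2]; have dle := dgen_leq_quotient_Cyc G.
split; first by apply/andP; split=> //; lia.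
case=> [[|xb [|? ?]] //= _]; rewrite andbT set_cons set_nil setU0 => xbG dxb.
have xb1 : xb != 1 by apply: contra_eqN dxb => /eqP->; rewrite -set1gE genGid dgen1.
have [x [g [xG gG def_xb ncyc]]] := quotient_Cyc_lift xbG xb1.
have [y [yG genG]] : exists y : (dgen G - 2).-tuple gT,
    all (mem G) y /\ <<[set:: x :: g :: y]>> = G.
  by apply: (flex2 [tuple x; g]); rewrite /= ?xG ?gG // !set_cons set_nil setU0 dgen_pair.
pose s := map (coset (Cyc G)) (g :: y) ++ nseq (dgen (G / Cyc G) - dgen G) 1.
have size_s : size s == (dgen (G / Cyc G) - 1)%N.
  by rewrite size_cat size_map size_nseq /= size_tuple; apply/eqP; lia.
have gyG : all (mem G) (g :: y) by rewrite /= gG.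
have nCs : [set:: x :: g :: y] \subset 'N(Cyc G).
  apply: subset_trans (normal_norm (Cyc_normal G)).
  by apply/subsetP => w; rewrite inE in_cons => /predU1P[-> | /(allP gyG)].
exists (Tuple size_s); split.
  rewrite all_cat; apply/andP; split; apply/allP => u.
    by move=> /mapP[w /(allP gyG) wG ->]; rewrite mem_quotient.
  by rewrite mem_nseq => /andP[_ /eqP ->]; exact: group1.
by rewrite /= -def_xb /s -cat_cons -map_cons gen_cat_nseq1 gen_seq_quotient // genG.
Qed.
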